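(* Let $k\ge0$, $n>2k$ and $\epsilon>0$. Fix any sequence $(s_{k,t})_{t=k+1}^{n-k}$ of maps $s_{k,t}:\mathcal Z^{2k+1}\to\hat{\mathcal X}$. Then for all $x^n\in\mathcal X^n$, $$\Pr\Big(L(x_{k+1}^{n-k},Z^n)-\tilde L(Z^n)>\epsilon\Big)\le(k+1)\exp\Big(-\frac{2(n-2k)\epsilon^2}{(k+1)L_{\max}^2}\Big)$$ and $$\Pr\Big(\tilde L(Z^n)-L(x_{k+1}^{n-k},Z^n)>\epsilon\Big)\le(k+1)\exp\Big(-\frac{2(n-2k)\epsilon^2}{(k+1)L_{\max}^2}\Big),$$ where $L(x_{k+1}^{n-k},z^n)=\frac1{n-2k}\sum_{t=k+1}^{n-k}\Lambda\big(x_t,s_{k,t}(z_{t-k}^{t+k})\big)$ and $\tilde L(z^n)=\frac1{n-2k}\sum_{t=k+1}^{n-k}\ell\big(z_t,s_{k,t}(\mathbf c_t,\cdot)\big)$.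
   Context: Let $\mathcal X,\mathcal Z,\hat{\mathcal X}$ be finite alphabets and $\Pi=\{\Pi(x,z)\}$ a $|\mathcal X|\times|\mathcal Z|$ stochastic matrix (discrete memoryless channel) of full row rank. For deterministic $x^n\in\mathcal X^n$, the channel output $Z^n$ has independent components with $\Pr(Z_t=z)=\Pi(x_t,z)$. Fix a loss $\Lambda:\mathcal X\times\hat{\mathcal X}\to[0,\infty)$, $\Lambda_{\max}=\max_{x,\hat x}\Lambda(x,\hat x)$. Let $\mathcal S$ be the set of all maps $s:\mathcal Z\to\hat{\mathcal X}$. Fix a real $|\mathcal Z|\times|\mathcal X|$ matrix $H$ with $\Pi H=I$; $h(z)\in\mathbb R^{\mathcal X}$ is the column vector equal to the $z$-th row of $H$. For $s\in\mathcal S$, $\rho_x(s)=\sum_z\Lambda(x,s(z))\Pi(x,z)$ and $\ell(z,s)=h(z)^T\rho(s)$. Let $\ell_{\max}=\max_{z,s}\ell(z,s)-\min_{z,s}\ell(z,s)$, $L_{\max}=\Lambda_{\max}+\ell_{\max}$. For $z^n$ and $k+1\le t\le n-k$, the context is $\mathbf c_t=(z_{t-k}^{t-1},z_{t+1}^{t+k})$, and $s_{k,t}(\mathbf c_t,\cdot)\in\mathcal S$ is the map $z\mapsto s_{k,t}(z_{t-k}^{t-1},z,z_{t+1}^{t+k})$. *)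

From HB Require Import structures.
From mathcomp Require Import all_boot all_order all_algebra.
From mathcomp Require Import all_classical all_reals all_analysis.
Set Implicit Arguments. Unset Strict Implicit. Unset Printing Implicit Defensive.
Import Order.TTheory GRing.Theory Num.Theory.
Local Open Scope ring_scope.

Section Defs.
Variables (R : realType) (X Z Xh : finType).

Definition stochastic (Pi : X -> Z -> R) : Prop :=
  (forall x z, 0 <= Pi x z) /\ (forall x, \sum_z Pi x z = 1).

Definition chan_mx (Pi : X -> Z -> R) : 'M[R]_(#|X|, #|Z|) :=
  \matrix_(i < #|X|, j < #|Z|) Pi (enum_val i) (enum_val j).

Definition full_row_rank (Pi : X -> Z -> R) : Prop := row_free (chan_mx Pi).

Definition chan_right_inverse (Pi : X -> Z -> R) (H : Z -> X -> R) : Prop :=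
  forall x x', \sum_z Pi x z * H z x' = (x == x')%:R.

Definition rho (Pi : X -> Z -> R) (Lam : X -> Xh -> R) (s : {ffun Z -> Xh}) (x : X) : R :=
  \sum_z Lam x (s z) * Pi x z.

Definition ell (Pi : X -> Z -> R) (H : Z -> X -> R) (Lam : X -> Xh -> R)
  (z : Z) (s : {ffun Z -> Xh}) : R :=
  \sum_x H z x * rho Pi Lam s x.

Definition Lam_max (Lam : X -> Xh -> R) : R := \big[Num.max/0]_(x : X) \big[Num.max/0]_(xh : Xh) Lam x xh.

Definition ell_values Pi H Lam : seq R :=
  [seq ell Pi H Lam z s | z <- enum Z, s <- enum {ffun Z -> Xh}].

Definition seq_max (l : seq R) : R := foldr Num.max (head 0 l) l.
Definition seq_min (l : seq R) : R := foldr Num.min (head 0 l) l.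

Definition ell_max Pi H Lam : R :=
  seq_max (ell_values Pi H Lam) - seq_min (ell_values Pi H Lam).

Definition L_max Pi H Lam : R := Lam_max Lam + ell_max Pi H Lam.

(* Time indices are 0-based: t ranges over k <= t < n - k
   (paper: k+1 <= t <= n-k).  Window z_{t-k}^{t+k} as a (2k+1)-vector;
   out-of-range indices never occur for t in range (default z t). *)
Definition window (n k : nat) (zn : 'I_n -> Z) (t : 'I_n) : {ffun 'I_(2*k+1) -> Z} :=
  [ffun j : 'I_(2*k+1) => zn (insubd t (t - k + j)%N)].

Definition window_rep (n k : nat) (zn : 'I_n -> Z) (t : 'I_n) (z0 : Z)
  : {ffun 'I_(2*k+1) -> Z} :=
  [ffun j : 'I_(2*k+1) => if (j == k :> nat) then z0 else zn (insubd t (t - k + j)%N)].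

Definition ctx_map (n k : nat) (s : nat -> {ffun 'I_(2*k+1) -> Z} -> Xh)
  (zn : 'I_n -> Z) (t : 'I_n) : {ffun Z -> Xh} :=
  [ffun z0 => s t (window_rep k zn t z0)].

Definition true_loss (n k : nat) (Lam : X -> Xh -> R)
  (s : nat -> {ffun 'I_(2*k+1) -> Z} -> Xh) (xn : 'I_n -> X) (zn : 'I_n -> Z) : R :=
  (n - 2*k)%:R^-1 * \sum_(t < n | (k <= t)%N && (t < n - k)%N) Lam (xn t) (s t (window k zn t)).

Definition est_loss (n k : nat) Pi H (Lam : X -> Xh -> R)
  (s : nat -> {ffun 'I_(2*k+1) -> Z} -> Xh) (zn : 'I_n -> Z) : R :=
  (n - 2*k)%:R^-1 * \sum_(t < n | (k <= t)%N && (t < n - k)%N) ell Pi H Lam (zn t) (ctx_map s zn t).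

(* Pr(E) for Z^n the output of the memoryless channel Pi on input xn *)
Definition chan_prob (n : nat) (Pi : X -> Z -> R) (xn : 'I_n -> X)
  (E : {ffun 'I_n -> Z} -> bool) : R :=
  \sum_(zn : {ffun 'I_n -> Z} | E zn) \prod_(t < n) Pi (xn t) (zn t).

End Defs.

From HB Require Import structures.
From mathcomp Require Import all_boot all_order all_algebra.
From mathcomp Require Import all_classical all_reals all_analysis.
From mathcomp Require Import ring lra zify.
Set Implicit Arguments. Unset Strict Implicit. Unset Printing Implicit Defensive.
Import Order.TTheory GRing.Theory Num.Theory.
Import numFieldNormedType.Exports.
Local Open Scope ring_scope.

(* Multiply the loss gap by n - 2k and split it into the increments
   D_t = Lam (x_t, s_t(window)) - ell (z_t, s_t(c_t, .)).  Since Pi H = I,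
   averaging ell (z, s) over z ~ Pi (x_t, .) gives rho_{x_t}(s), so D_t has
   conditional mean zero given all outputs but z_t; it lies in an interval of
   length L_max and depends on z^n only through the window around t.
   Positions with the same residue mod k+1 are more than k apart, so along
   one residue class the exponential moment of the sum of the D_t can be
   peeled off one coordinate at a time with Hoeffding's lemma.  A gap above
   eps forces one of the k+1 classes to exceed its share, whence the factor
   k+1. *)

Section HoeffdingLemma.
Variable R : realType.

Local Open Scope classical_set_scope.
Lemma is_derive_le0_nincr {f df : R -> R} :
  (forall x : R, 0 <= x -> is_derive x (1 : R) f (df x)) ->
  (forall x : R, 0 <= x -> df x <= 0) -> forall u : R, 0 <= u -> f u <= f 0.
Proof.
move=> f_df df_le0 u u_ge0.
have f_df_in (x : R) : x \in `]0, u[%R -> is_derive x 1 f (df x).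
  by rewrite in_itv /= => /andP[/ltW x_ge0 _]; exact: f_df.
have f_cont : {within `[0, u], continuous f}.
  apply: continuous_in_subspaceT => x /[!inE] /=; rewrite in_itv /= => /andP[x_ge0 _].
  have [f_der _] := f_df x x_ge0.
  exact/differentiable_continuous/derivable1_diffP.
have [c c_in f_diff] := MVT_segment u_ge0 f_df_in f_cont.
rewrite -subr_le0 f_diff subr0 mulr_le0_ge0 //.
by apply: df_le0; move: c_in; rewrite in_itv /= => /andP[].
Qed.
Local Close Scope classical_set_scope.

Lemma bernoulli_mgf_gt0 (th x : R) : 0 <= th <= 1 -> 0 < 1 - th + th * expR x.
Proof.
case/andP=> th_ge0 th_le1; have [->|th_neq1] := eqVneq th 1.
  by rewrite subrr add0r mul1r expR_gt0.
by rewrite ltr_wpDr ?mulr_ge0 ?expR_ge0 // subr_gt0 lt_neqAle th_neq1.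
Qed.

(* The derivative of [log (1 - th + th e^x) - th x - x^2/8] is [p - th - x/4],
   where [p] is the tilted mean; it vanishes at 0 and its own derivative
   [p (1 - p) - 1/4] is nonpositive. *)
Lemma tilted_mean_le (th u : R) : 0 <= th <= 1 -> 0 <= u ->
  th * expR u / (1 - th + th * expR u) - th - u / 4 <= 0.
Proof.
move=> th01 u_ge0.
pose w x := 1 - th + th * expR x.
pose p x := th * expR x / w x.
pose g x := p x - th - x / 4.
have g_deriv (x : R) : 0 <= x -> is_derive x (1 : R) g (p x * (1 - p x) - 1 / 4).
  move=> _; have /gt_eqF/negbT w_neq0 := @bernoulli_mgf_gt0 th x th01.
  by rewrite /g /p; apply: trigger_derive; rewrite /GRing.scale /=; field.
have := is_derive_le0_nincr g_deriv _ u_ge0.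
rewrite /g /p /w expR0 mulr1 subrK divr1 subrr mul0r subr0 => -> // x _.
rewrite -/(w x) -/(p x).
have : 0 <= (p x - 1 / 2) ^+ 2 by apply: sqr_ge0.
rewrite expr2; nra.
Qed.

Lemma bernoulli_mgf_le (th u : R) : 0 <= th <= 1 -> 0 <= u ->
  1 - th + th * expR u <= expR (th * u + u ^+ 2 / 8).
Proof.
move=> th01 u_ge0.
pose w x := 1 - th + th * expR x.
pose F x := w x * expR (- (th * x) - x ^+ 2 / 8).
have F_deriv (x : R) : 0 <= x -> is_derive x (1 : R) F
    (expR (- (th * x) - x ^+ 2 / 8) * w x * (th * expR x / w x - th - x / 4)).
  move=> _; have /gt_eqF/negbT w_neq0 := @bernoulli_mgf_gt0 th x th01.
  by rewrite /F; apply: trigger_derive; rewrite /GRing.scale /=; field.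
have := is_derive_le0_nincr F_deriv _ u_ge0.
rewrite /F /w expR0 expr0n /= !mulr0 mul0r mulr1 subrK oppr0.
rewrite addr0 expR0 mul1r -opprD expRN ler_pdivrMr ?expR_gt0 //.
rewrite mul1r; apply=> x x_ge0.
rewrite -mulrA mulr_ge0_le0 ?expR_ge0 // mulr_ge0_le0 ?tilted_mean_le //.
exact/ltW/bernoulli_mgf_gt0.
Qed.

Lemma expR_le_chord (a b d lam : R) : a <= d <= b ->
  expR (lam * d) * (b - a) <= (b - d) * expR (lam * a) + (d - a) * expR (lam * b).
Proof.
case/andP=> a_le_d d_le_b.
have tangent c : expR (lam * d) * (1 + lam * (c - d)) <= expR (lam * c).
  have -> : lam * c = lam * d + lam * (c - d) by ring.
  by rewrite expRD ler_pM2l ?expR_gt0 // expR_ge1Dx.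
have := ler_wpM2l (_ : 0 <= b - d) (tangent a).
have := ler_wpM2l (_ : 0 <= d - a) (tangent b).
rewrite !subr_ge0 => /(_ a_le_d) tb /(_ d_le_b) ta.
apply: le_trans (lerD ta tb); rewrite le_eqVlt; apply/orP; left; apply/eqP; ring.
Qed.

Lemma hoeffding_lemma (T : finType) (q d : T -> R) (a b lam : R) :
  (forall z, 0 <= q z) -> \sum_z q z = 1 -> (forall z, a <= d z <= b) ->
  \sum_z q z * d z = 0 -> 0 <= lam ->
  \sum_z q z * expR (lam * d z) <= expR (lam ^+ 2 * (b - a) ^+ 2 / 8).
Proof.
move=> q_ge0 q_sum1 d_ab q_mean0 lam_ge0.
have a_le0 : a <= 0.
  rewrite -q_mean0 -[a]mul1r -q_sum1 mulr_suml; apply: ler_sum => z _.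
  by rewrite ler_wpM2l //; case/andP: (d_ab z).
have b_ge0 : 0 <= b.
  rewrite -q_mean0 -[b]mul1r -q_sum1 mulr_suml; apply: ler_sum => z _.
  by rewrite ler_wpM2l //; case/andP: (d_ab z).
have [ab0|ab_neq0] := eqVneq (b - a) 0.
  have d0 z : d z = 0 by have := d_ab z; lra.
  under eq_bigr => z _ do rewrite d0 mulr0 expR0 mulr1.
  by rewrite q_sum1 ab0 expr0n /= mulr0 mul0r expR0.
have ab_gt0 : 0 < b - a by rewrite lt_neqAle eq_sym ab_neq0 subr_ge0 (le_trans a_le0).
set ea := expR (lam * a); set eb := expR (lam * b).
have chord_mean : \sum_z q z * expR (lam * d z) <= (b * ea - a * eb) / (b - a).
  rewrite ler_pdivlMr // mulr_suml.
  apply: (@le_trans _ _ (\sum_z q z * ((b - d z) * ea + (d z - a) * eb))).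
    by apply: ler_sum => z _; rewrite -mulrA ler_wpM2l ?expR_le_chord.
  have -> : \sum_z q z * ((b - d z) * ea + (d z - a) * eb) =
      (b * ea - a * eb) * \sum_z q z - (ea - eb) * \sum_z q z * d z.
    by rewrite mulr_sumr mulr_sumr -sumrB; apply: eq_bigr => z _; ring.
  by rewrite q_sum1 q_mean0 mulr0 subr0 mulr1.
apply: (le_trans chord_mean).
pose th := - a / (b - a); pose u := lam * (b - a).
have th01 : 0 <= th <= 1.
  by rewrite /th divr_ge0 ?oppr_ge0 ?(ltW ab_gt0) //= ler_pdivrMr // mul1r; lra.
have chord_eq : (b * ea - a * eb) / (b - a) = ea * (1 - th + th * expR u).
  have -> : eb = ea * expR u by rewrite /eb /ea /u -expRD; congr expR; ring.
  by rewrite /th; field.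
have mgf_le := @bernoulli_mgf_le th u th01 (mulr_ge0 lam_ge0 (ltW ab_gt0)).
rewrite chord_eq; apply: (le_trans (ler_wpM2l (expR_ge0 _) mgf_le)).
rewrite /ea -expRD le_eqVlt; apply/orP; left; apply/eqP; congr expR.
by rewrite /th /u; field.
Qed.

End HoeffdingLemma.

Section ProductMass.
Variables (R : realType) (T Z : finType) (p : T -> Z -> R).
Hypotheses (p_ge0 : forall t z, 0 <= p t z) (p_sum1 : forall t, \sum_z p t z = 1).

Definition prod_mass (f : {ffun T -> Z}) : R := \prod_t p t (f t).

Definition upd (f : {ffun T -> Z}) (t : T) (z : Z) : {ffun T -> Z} :=
  [ffun i => if i == t then z else f i].

Lemma upd_same f t z : upd f t z t = z.
Proof. by rewrite ffunE eqxx. Qed.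

Lemma upd_other f t z i : i != t -> upd f t z i = f i.
Proof. by rewrite ffunE => /negPf ->. Qed.

Lemma upd_upd f t z y : upd (upd f t z) t y = upd f t y.
Proof. by apply/ffunP => i; rewrite !ffunE; case: eqP. Qed.

Lemma upd_fixed f t : upd f t (f t) = f.
Proof. by apply/ffunP => i; rewrite ffunE; case: eqP => // ->. Qed.

Lemma prod_mass_ge0 f : 0 <= prod_mass f.
Proof. exact: prodr_ge0. Qed.

Lemma sum_prod_mass : \sum_f prod_mass f = 1.
Proof. by rewrite -bigA_distr_bigA big1 // => t _; rewrite p_sum1. Qed.

Lemma prod_mass_upd f t z : prod_mass f * p t z = p t (f t) * prod_mass (upd f t z).
Proof.
rewrite /prod_mass (bigD1 t) // [in RHS](bigD1 t) //= upd_same.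
under [in RHS]eq_bigr => i it do rewrite upd_other //.
by ring.
Qed.

Lemma sum_prod_mass_coord (F : {ffun T -> Z} -> R) t :
  \sum_f prod_mass f * F f = \sum_f prod_mass f * \sum_z p t z * F (upd f t z).
Proof.
have -> : \sum_f prod_mass f * \sum_z p t z * F (upd f t z) =
    \sum_(f : {ffun T -> Z}) \sum_z p t (f t) * (prod_mass (upd f t z) * F (upd f t z)).
  apply: eq_bigr => f _; rewrite mulr_sumr; apply: eq_bigr => z _.
  by rewrite mulrA prod_mass_upd mulrA.
rewrite pair_big /=.
pose swap (gy : {ffun T -> Z} * Z) := (upd gy.1 t gy.2, gy.1 t).
have swapK : involutive swap.
  by case=> g y; rewrite /swap /= upd_upd upd_fixed upd_same.
rewrite (reindex swap) /=; last by exists swap => gy _; exact: swapK.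
rewrite -(pair_big xpredT xpredT (fun g y => p t (upd g t y t) *
  (prod_mass (upd (upd g t y) t (g t)) * F (upd (upd g t y) t (g t))))) /=.
apply: eq_bigr => g _; under eq_bigr => y _ do rewrite upd_same upd_upd upd_fixed.
by rewrite -mulr_suml p_sum1 mul1r.
Qed.

Lemma sum_prod_mass_prod_le (G : T -> {ffun T -> Z} -> R) (K : R) (C : {set T}) :
  0 <= K -> (forall t f, 0 <= G t f) ->
  (forall t u, t \in C -> u \in C -> u != t -> forall f z, G t (upd f u z) = G t f) ->
  (forall t, t \in C -> forall f, \sum_z p t z * G t (upd f t z) <= K) ->
  \sum_f prod_mass f * \prod_(t in C) G t f <= K ^+ #|C|.
Proof.
move=> K_ge0 G_ge0; have [m] := ubnP #|C|; elim: m C => // m IH C C_lt G_local G_le.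
have [->|[t tC]] := set_0Vmem C.
  by under eq_bigr => f _ do rewrite big_set0 mulr1; rewrite sum_prod_mass cards0.
pose C' := C :\ t.
have C'_in u : (u \in C') = (u != t) && (u \in C) by rewrite !inE.
rewrite (cardsD1 t C) tC -/C' exprS (sum_prod_mass_coord _ t).
have -> : \sum_f prod_mass f * \sum_z p t z * \prod_(u in C) G u (upd f t z) =
    \sum_f (prod_mass f * \prod_(u in C') G u f) * \sum_z p t z * G t (upd f t z).
  apply: eq_bigr => f _; rewrite -mulrA; congr (_ * _).
  rewrite mulr_sumr; apply: eq_bigr => z _; rewrite (bigD1 t) //=.
  have -> : \prod_(u in C | u != t) G u (upd f t z) = \prod_(u in C') G u f.
    rewrite [RHS]big_mkcond [LHS]big_mkcond; apply: eq_bigr => u _.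
    by rewrite C'_in andbC; case: ifP => // /andP[uC ut]; rewrite G_local // eq_sym.
  by ring.
apply: (@le_trans _ _ (\sum_f (prod_mass f * \prod_(u in C') G u f) * K)).
  apply: ler_sum => f _; apply: ler_wpM2l; last exact: G_le.
  by rewrite mulr_ge0 ?prod_mass_ge0 // prodr_ge0.
rewrite -mulr_suml mulrC ler_wpM2l //; apply: IH.
- by move: C_lt; rewrite (cardsD1 t C) tC.
- by move=> a b; rewrite !C'_in => /andP[_ aC] /andP[_ bC]; exact: G_local.
- by move=> a; rewrite C'_in => /andP[_ aC]; exact: G_le.
Qed.

End ProductMass.

Lemma sum_expR_ge1 (R : realType) (I : finType) (a : I -> R) (lam : R) :
  0 <= lam -> 0 < \sum_i a i -> 1 <= \sum_i expR (lam * a i).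
Proof.
move=> lam_ge0 sum_gt0.
have [/existsP[i a_gt0]|/existsPn a_le0] := boolP [exists i, 0 < a i]; last first.
  have : \sum_i a i <= 0 by apply: sumr_le0 => i _; rewrite leNgt a_le0.
  by rewrite leNgt sum_gt0.
have exp_ge1 : 1 <= expR (lam * a i).
  by apply: (le_trans _ (expR_ge1Dx _)); rewrite lerDl mulr_ge0 // ltW.
rewrite (bigD1 i) //= -[1]addr0 lerD //.
by apply: sumr_ge0 => j _; exact: expR_ge0.
Qed.

(* Hoeffding's lemma with [lam = 4 eps / (b - a)^2], the tilt for which
   [lam^2 (b - a)^2 / 8] exactly cancels the drift [lam eps / 2]. *)
Lemma hoeffding_tilt_le1 (R : realType) (T : finType) (q d : T -> R) (a b eps : R) :
  (forall z, 0 <= q z) -> \sum_z q z = 1 -> (forall z, a <= d z <= b) ->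
  \sum_z q z * d z = 0 -> a < b -> 0 <= eps ->
  \sum_z q z * expR (4 * eps / (b - a) ^+ 2 * (d z - eps / 2)) <= 1.
Proof.
move=> q_ge0 q_sum1 d_ab q_mean0 a_lt_b eps_ge0.
have ba_neq0 : b - a != 0 by rewrite subr_eq0 gt_eqF.
set lam := 4 * eps / (b - a) ^+ 2.
have lam_ge0 : 0 <= lam by rewrite divr_ge0 ?sqr_ge0 ?mulr_ge0.
have -> : \sum_z q z * expR (lam * (d z - eps / 2)) =
    (\sum_z q z * expR (lam * d z)) * expR (- (lam * (eps / 2))).
  by rewrite mulr_suml; apply: eq_bigr => z _; rewrite mulrBr expRD mulrA.
have := hoeffding_lemma q_ge0 q_sum1 d_ab q_mean0 lam_ge0.
move=> /(ler_wpM2r (expR_ge0 (- (lam * (eps / 2))))) /le_trans; apply.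
rewrite -expRD -[X in _ <= X]expR0 ler_expR le_eqVlt; apply/orP; left; apply/eqP.
by rewrite /lam; field.
Qed.

Definition window_inside {n : nat} (k : nat) (t : 'I_n) : bool := (k <= t)%N && (t < n - k)%N.

Definition phase {n : nat} (k : nat) (t : 'I_n) : 'I_k.+1 := Ordinal (ltn_pmod t (ltn0Sn k)).

Lemma sum_window_inside1 (R : realType) (n k : nat) : (2 * k < n)%N ->
  \sum_(t < n | window_inside k t) (1 : R) = (n - 2 * k)%:R.
Proof.
move=> n_gt2k; rewrite /window_inside.
rewrite -(big_mkord (fun t => (k <= t)%N && (t < n - k)%N) (fun _ => (1 : R))).
rewrite (@big_cat_nat _ _ _ k) //=; last lia.
rewrite [X in X + _]big1_seq ?add0r; last first.
  by move=> i /andP[/andP[ki _]]; rewrite mem_index_iota => /andP[_ ik]; lia.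
rewrite (@big_cat_nat _ _ _ (n - k)) //=; [|lia|lia].
rewrite [X in _ + X]big1_seq ?addr0; last first.
  by move=> i /andP[/andP[_ ki]]; rewrite mem_index_iota => /andP[ik _]; lia.
rewrite -big_filter.
have -> : [seq i <- index_iota k (n - k) | (k <= i)%N && (i < n - k)%N] = index_iota k (n - k).
  by apply/all_filterP/allP => i; rewrite mem_index_iota.
by rewrite sumr_const_nat; congr (_%:R); lia.
Qed.

Section InterleavedHoeffding.
Variables (R : realType) (Z : finType) (n k : nat) (p : 'I_n -> Z -> R).

Definition phase_class (j : 'I_k.+1) : {set 'I_n} :=
  [set t | window_inside k t && (phase k t == j)].

Definition centred_local_family (D : 'I_n -> {ffun 'I_n -> Z} -> R) (a b : R) : Prop :=
  [/\ forall t, window_inside k t -> forall f, \sum_z p t z * D t (upd f t z) = 0,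
      forall t, window_inside k t -> forall f, a <= D t f <= b &
      forall t u, window_inside k t -> window_inside k u -> u != t ->
        phase k t = phase k u -> forall f z, D t (upd f u z) = D t f].

Lemma centred_local_family_opp D a b : centred_local_family D a b ->
  centred_local_family (fun t f => - D t f) (- b) (- a).
Proof.
case=> D_mean0 D_ab D_local; split=> [t tin f|t tin f|t u tin uin ut tu f z].
- by under eq_bigr => z _ do rewrite mulrN; rewrite sumrN D_mean0 ?oppr0.
- by rewrite !lerN2 andbC; exact: D_ab.
- by rewrite D_local.
Qed.

Hypotheses (p_ge0 : forall t z, 0 <= p t z) (p_sum1 : forall t, \sum_z p t z = 1).
Hypothesis n_gt2k : (2 * k < n)%N.
Variables (D : 'I_n -> {ffun 'I_n -> Z} -> R) (a b eps : R).
Hypotheses (D_centred : centred_local_family D a b) (a_lt_b : a < b) (eps_gt0 : 0 < eps).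

Let lam := 4 * eps / (b - a) ^+ 2.
Let del := (n - 2 * k)%:R * eps / (2 * k.+1%:R).

Let lam_gt0 : 0 < lam.
Proof. by rewrite /lam divr_gt0 ?mulr_gt0 // subr_gt0. Qed.

Lemma phase_class_tilt_le1 j :
  \sum_f prod_mass p f * \prod_(t in phase_class j) expR (lam * (D t f - eps / 2)) <= 1.
Proof.
case: D_centred => D_mean0 D_ab D_local.
rewrite -[X in _ <= X](expr1n R #|phase_class j|).
apply: (sum_prod_mass_prod_le p_ge0 p_sum1) => //.
- move=> t u; rewrite !inE => /andP[tin /eqP tj] /andP[uin /eqP uj] ut f z.
  by rewrite D_local // tj uj.
- move=> t; rewrite inE => /andP[tin _] f.
  exact: (hoeffding_tilt_le1 (p_ge0 t) (p_sum1 t) (fun z => D_ab t tin (upd f t z))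
    (D_mean0 t tin f) a_lt_b (ltW eps_gt0)).
Qed.

(* Pigeonhole: a large total deviation forces a large deviation in some phase. *)
Lemma deviation_tilts_ge1 f :
  eps * (n - 2 * k)%:R < \sum_(t | window_inside k t) D t f ->
  1 <= \sum_j expR (- (lam * del)) * \prod_(t in phase_class j) expR (lam * (D t f - eps / 2)).
Proof.
move=> dev.
pose a_ (j : 'I_k.+1) :=
  \sum_(t | window_inside k t && (phase k t == j)) (D t f - eps / 2) - del.
have -> : \sum_j expR (- (lam * del)) * \prod_(t in phase_class j)
    expR (lam * (D t f - eps / 2)) = \sum_j expR (lam * a_ j).
  apply: eq_bigr => j _; rewrite /a_ mulrBr mulr_sumr addrC expRD expR_sum.
  by congr (_ * _); apply: eq_bigl => t; rewrite inE.
apply: sum_expR_ge1; first exact: ltW.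
have -> : \sum_j a_ j = \sum_(t | window_inside k t) D t f - eps * (n - 2 * k)%:R.
  rewrite /a_ sumrB sumr_const card_ord.
  rewrite -(partition_big (phase k) xpredT) //=.
  rewrite sumrB -(mulr1 (eps / 2)) -mulr_sumr sum_window_inside1 // /del.
  by field; rewrite addrC natr1 pnatr_eq0.
by rewrite subr_gt0.
Qed.

Theorem interleaved_hoeffding :
  \sum_(f | eps * (n - 2 * k)%:R < \sum_(t | window_inside k t) D t f) prod_mass p f <=
  k.+1%:R * expR (- (2 * (n - 2 * k)%:R * eps ^+ 2) / (k.+1%:R * (b - a) ^+ 2)).
Proof.
pose tilts f := \sum_j expR (- (lam * del)) *
  \prod_(t in phase_class j) expR (lam * (D t f - eps / 2)).
have tilts_ge0 f : 0 <= tilts f.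
  by apply: sumr_ge0 => j _; rewrite mulr_ge0 ?expR_ge0 // prodr_ge0.
apply: (@le_trans _ _ (\sum_f prod_mass p f * tilts f)).
  rewrite big_mkcond; apply: ler_sum => f _; case: ifP => [dev|_].
    by rewrite -{1}[prod_mass p f]mulr1 ler_wpM2l ?prod_mass_ge0 ?deviation_tilts_ge1.
  by rewrite mulr_ge0 ?prod_mass_ge0.
under eq_bigr => f _ do rewrite mulr_sumr.
rewrite exchange_big /=.
apply: (@le_trans _ _ (\sum_(j < k.+1) expR (- (lam * del)))).
  apply: ler_sum => j _; under eq_bigr => f _ do rewrite mulrCA.
  rewrite -mulr_sumr -[X in _ <= X]mulr1 ler_wpM2l ?expR_ge0 //.
  exact: phase_class_tilt_le1.
rewrite sumr_const card_ord -[X in X <= _]mulr_natl ler_wpM2l // le_eqVlt.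
have ba_neq0 : b - a != 0 by rewrite subr_eq0 gt_eqF.
apply/orP; left; apply/eqP; congr expR; rewrite /lam /del; field.
by rewrite ba_neq0 addrC natr1 pnatr_eq0.
Qed.

End InterleavedHoeffding.

Lemma ltn_addr_eqmod (m x y : nat) : (x < y)%N -> (x %% m.+1 = y %% m.+1)%N ->
  (x + m < y)%N.
Proof.
move=> x_lt_y xy_mod.
have : (m.+1 %| y - x)%N by rewrite -eqn_mod_dvd; [apply/eqP | exact: ltnW].
by move/dvdn_leq; rewrite subn_gt0 => /(_ x_lt_y); lia.
Qed.

Section Windows.
Variables (Z Xh : finType) (n k : nat).

Lemma val_window_index (t : 'I_n) (j : 'I_(2 * k + 1)) : window_inside k t ->
  val (insubd t (t - k + j)%N) = (t - k + j)%N.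
Proof.
case/andP=> k_le_t t_lt; rewrite val_insubd.
by have -> : (t - k + j < n)%N by have := ltn_ord j; lia.
Qed.

(* When [t - k + j] falls outside ['I_n], [insubd] defaults to [t] itself. *)
Lemma window_index_near (t : 'I_n) (j : 'I_(2 * k + 1)) : (k <= t)%N ->
  (t - k <= val (insubd t (t - k + j)%N) <= t + k)%N.
Proof.
move=> k_le_t; rewrite val_insubd.
by case: ifP => _ /=; have := ltn_ord j; move: k_le_t; case: t => t t_lt /=; lia.
Qed.

Lemma window_upd_center (f : {ffun 'I_n -> Z}) (t : 'I_n) z : window_inside k t ->
  window k (upd f t z) t = window_rep k f t z.
Proof.
move=> tin; apply/ffunP => j; rewrite !ffunE.
have -> : (insubd t (t - k + j)%N == t) = (j == k :> nat).
  rewrite -val_eqE /= val_window_index //; case/andP: tin => k_le_t _.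
  by apply/eqP/eqP; lia.
by [].
Qed.

Lemma window_rep_upd_center (f : {ffun 'I_n -> Z}) (t : 'I_n) z z0 :
  window_inside k t -> window_rep k (upd f t z) t z0 = window_rep k f t z0.
Proof.
move=> tin; apply/ffunP => j; rewrite !ffunE; case: eqP => // j_neq_k.
have -> : (insubd t (t - k + j)%N == t) = false.
  apply/negbTE; rewrite -val_eqE /= val_window_index //; case/andP: tin => k_le_t _.
  by apply/eqP; lia.
by [].
Qed.

Lemma ctx_map_upd_center (s : nat -> {ffun 'I_(2 * k + 1) -> Z} -> Xh)
    (f : {ffun 'I_n -> Z}) (t : 'I_n) z :
  window_inside k t -> ctx_map s (upd f t z) t = ctx_map s f t.
Proof. by move=> tin; apply/ffunP => z0; rewrite !ffunE window_rep_upd_center. Qed.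

Lemma window_eq_near (f g : {ffun 'I_n -> Z}) (t : 'I_n) : (k <= t)%N ->
  (forall i : 'I_n, (t - k <= i <= t + k)%N -> f i = g i) ->
  window k f t = window k g t.
Proof.
by move=> k_le_t fg; apply/ffunP => j; rewrite !ffunE fg // window_index_near.
Qed.

Lemma ctx_map_eq_near (s : nat -> {ffun 'I_(2 * k + 1) -> Z} -> Xh)
    (f g : {ffun 'I_n -> Z}) (t : 'I_n) : (k <= t)%N ->
  (forall i : 'I_n, (t - k <= i <= t + k)%N -> f i = g i) ->
  ctx_map s f t = ctx_map s g t.
Proof.
move=> k_le_t fg; apply/ffunP => z0; rewrite !ffunE; congr (s _ _).
by apply/ffunP => j; rewrite !ffunE; case: ifP => // _; rewrite fg // window_index_near.
Qed.

Lemma phase_eq_far (t u : 'I_n) : phase k t = phase k u -> u != t ->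
  (u + k < t)%N || (t + k < u)%N.
Proof.
move=> /(congr1 val) /= tu_mod u_neq_t.
have [t_lt_u|u_lt_t|tu] := ltngtP t u.
- by rewrite (ltn_addr_eqmod t_lt_u tu_mod) orbT.
- by rewrite (ltn_addr_eqmod u_lt_t (esym tu_mod)).
- by move: u_neq_t; rewrite -val_eqE /= tu eqxx.
Qed.

End Windows.

Lemma le_foldr_max (R : realType) (d : R) (l : seq R) x : x \in l -> x <= foldr Num.max d l.
Proof.
elim: l => // a l IH; rewrite inE /= => /orP[/eqP->|/IH x_le].
  by rewrite le_max lexx.
by rewrite le_max x_le orbT.
Qed.

Lemma foldr_min_le (R : realType) (d : R) (l : seq R) x : x \in l -> foldr Num.min d l <= x.
Proof.
elim: l => // a l IH; rewrite inE /= => /orP[/eqP->|/IH le_x].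
  by rewrite ge_min lexx.
by rewrite ge_min le_x orbT.
Qed.

Lemma seq_min_le_max (R : realType) (l : seq R) : seq_min l <= seq_max l.
Proof.
case: l => [|a l] //; apply: (@le_trans _ _ a).
  by apply: foldr_min_le; rewrite inE eqxx.
by apply: le_foldr_max; rewrite inE eqxx.
Qed.

Section ChannelLoss.
Variables (R : realType) (X Z Xh : finType).
Variables (Pi : X -> Z -> R) (H : Z -> X -> R) (Lam : X -> Xh -> R).

Lemma Lam_le_max x xh : Lam x xh <= Lam_max Lam.
Proof. exact: le_trans (le_bigmax _ _ xh) (le_bigmax _ _ x). Qed.

Lemma Lam_max_ge0 : 0 <= Lam_max Lam.
Proof. exact: bigmax_ge_id. Qed.

Lemma ell_in_range z sm :
  seq_min (ell_values Pi H Lam) <= ell Pi H Lam z sm <= seq_max (ell_values Pi H Lam).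
Proof.
have ell_in : ell Pi H Lam z sm \in ell_values Pi H Lam.
  by apply: (allpairs_f (fun z sm => ell Pi H Lam z sm)); rewrite mem_enum.
by rewrite foldr_min_le // le_foldr_max.
Qed.

Lemma L_max_ge0 : 0 <= L_max Pi H Lam.
Proof. by rewrite addr_ge0 ?Lam_max_ge0 // subr_ge0 seq_min_le_max. Qed.

Lemma chan_prob_le1 n (xn : 'I_n -> X) E : stochastic Pi -> chan_prob Pi xn E <= 1.
Proof.
case=> Pi_ge0 Pi_sum1; have p_ge0 t := Pi_ge0 (xn t).
rewrite -(sum_prod_mass (fun t => Pi_sum1 (xn t))) [X in _ <= X](bigID E) /= lerDl.
by apply: sumr_ge0 => f _; exact: prod_mass_ge0.
Qed.

Lemma sum_chan_ell x sm : chan_right_inverse Pi H ->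
  \sum_z Pi x z * ell Pi H Lam z sm = rho Pi Lam sm x.
Proof.
move=> PiH; rewrite /ell.
have -> : \sum_z Pi x z * \sum_y H z y * rho Pi Lam sm y =
    \sum_y (\sum_z Pi x z * H z y) * rho Pi Lam sm y.
  under eq_bigr => z _ do rewrite mulr_sumr.
  rewrite exchange_big /=; apply: eq_bigr => y _; rewrite mulr_suml.
  by apply: eq_bigr => z _; rewrite mulrA.
under eq_bigr => y _ do rewrite PiH.
rewrite (bigD1 x) //= eqxx mul1r big1 ?addr0 // => y.
by rewrite eq_sym => /negPf ->; rewrite mul0r.
Qed.

Variables (n k : nat) (s : nat -> {ffun 'I_(2 * k + 1) -> Z} -> Xh) (xn : 'I_n -> X).

Definition loss_diff (t : 'I_n) (f : {ffun 'I_n -> Z}) : R :=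
  Lam (xn t) (s t (window k f t)) - ell Pi H Lam (f t) (ctx_map s f t).

Lemma true_loss_sub_est_loss (f : {ffun 'I_n -> Z}) :
  true_loss Lam s xn f - est_loss Pi H Lam s f =
  (n - 2 * k)%:R^-1 * \sum_(t | window_inside k t) loss_diff t f.
Proof. by rewrite /true_loss /est_loss -mulrBr -sumrB. Qed.

Lemma loss_diff_centred : chan_right_inverse Pi H -> (forall x xh, 0 <= Lam x xh) ->
  centred_local_family k (fun t => Pi (xn t)) loss_diff
    (- seq_max (ell_values Pi H Lam)) (Lam_max Lam - seq_min (ell_values Pi H Lam)).
Proof.
move=> PiH Lam_ge0; split=> [t tin f|t tin f|t u tin uin u_neq_t tu f z].
- set sm := ctx_map s f t.
  have sm_z z : s t (window_rep k f t z) = sm z by rewrite ffunE.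
  under eq_bigr => z _ do rewrite /loss_diff window_upd_center // upd_same
    ctx_map_upd_center // sm_z mulrBr.
  rewrite sumrB sum_chan_ell // /rho; apply/eqP; rewrite subr_eq0.
  by apply/eqP/eq_bigr => z _; rewrite mulrC.
- have := ell_in_range (f t) (ctx_map s f t); have := Lam_le_max (xn t) (s t (window k f t)).
  by have := Lam_ge0 (xn t) (s t (window k f t)); rewrite /loss_diff; lra.
- have k_le_t : (k <= t)%N by case/andP: tin.
  have far := phase_eq_far tu u_neq_t.
  have near_eq (i : 'I_n) : (t - k <= i <= t + k)%N -> upd f u z i = f i.
    move=> i_near; apply: upd_other; rewrite -val_eqE /=; apply/eqP => iu.
    by move: far i_near; rewrite iu; lia.
  rewrite /loss_diff (window_eq_near k_le_t near_eq) (ctx_map_eq_near s k_le_t near_eq).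
  by rewrite near_eq //; lia.
Qed.

End ChannelLoss.

Theorem lemma2 (R : realType) (X Z Xh : finType)
  (Pi : X -> Z -> R) (H : Z -> X -> R) (Lam : X -> Xh -> R)
  (HPi : stochastic Pi) (Hrank : full_row_rank Pi) (HH : chan_right_inverse Pi H)
  (HLam : forall x xh, 0 <= Lam x xh)
  (k n : nat) (hn : (2 * k < n)%N) (eps : R) (heps : 0 < eps)
  (s : nat -> {ffun 'I_(2*k+1) -> Z} -> Xh) (xn : 'I_n -> X) :
  let bound := k.+1%:R * expR (- (2 * (n - 2 * k)%:R * eps ^+ 2)
                 / (k.+1%:R * L_max Pi H Lam ^+ 2)) in
  chan_prob Pi xn (fun zn => true_loss Lam s xn zn - est_loss Pi H Lam s zn > eps)
    <= bound /\
  chan_prob Pi xn (fun zn => est_loss Pi H Lam s zn - true_loss Lam s xn zn > eps)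
    <= bound.
Proof.
(* [Hrank] only guarantees that a right inverse [H] exists. *)
move=> bound; have [L_gt0|L_le0] := ltP 0 (L_max Pi H Lam); last first.
  (* With [L_max = 0] the exponent divides by zero, so [bound = k + 1]. *)
  have L0 : L_max Pi H Lam = 0 by apply/le_anti; rewrite L_le0 L_max_ge0.
  have bound_ge1 : 1 <= bound.
    by rewrite /bound L0 expr0n /= mulr0 invr0 mulr0 expR0 mulr1 ler1n.
  by split; apply: le_trans (chan_prob_le1 _ _ HPi) bound_ge1.
case: HPi => Pi_ge0 Pi_sum1.
have D_centred := loss_diff_centred s xn HH HLam.
set lo := seq_min _ in D_centred; set hi := seq_max _ in D_centred.
have N_gt0 : 0 < (n - 2 * k)%:R :> R by rewrite ltr0n subn_gt0.
have width : Lam_max Lam - lo - - hi = L_max Pi H Lam.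
  by rewrite /L_max /ell_max -/lo -/hi; ring.
split; rewrite /chan_prob.
- under eq_bigl => f do rewrite true_loss_sub_est_loss ltr_pdivlMl // mulrC.
  have := interleaved_hoeffding (fun t => Pi_ge0 (xn t)) (fun t => Pi_sum1 (xn t)) hn
    D_centred _ heps.
  by rewrite width; apply; lra.
- under eq_bigl => f do rewrite -opprB true_loss_sub_est_loss -mulrN -sumrN
    ltr_pdivlMl // mulrC.
  have := interleaved_hoeffding (fun t => Pi_ge0 (xn t)) (fun t => Pi_sum1 (xn t)) hn
    (centred_local_family_opp D_centred) _ heps.
  have width_opp : - - hi - - (Lam_max Lam - lo) = L_max Pi H Lam by rewrite -width; ring.
  by rewrite width_opp; apply; lra.
Qed.
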